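(* Let $\mathcal{A}$ be a central, essential hyperplane arrangement in $\mathbb{R}^d$, let $\ell$ be a modular coatom of $\mathcal{A}$, and let $c$ be a chamber incident to $\ell$. Write $\mathcal{A}_\ell$ for the set of hyperplanes of $\mathcal{A}$ containing $\ell$. (i) The set of chambers $c'$ with $c'/\ell=c/\ell$ can be linearly ordered as $c_1=c,c_2,\ldots,c_t$ so that $$\varnothing=L_1(c,c_1)\subset L_1(c,c_2)\subset\cdots\subset L_1(c,c_t)=\mathcal{A}\setminus\mathcal{A}_\ell,$$ each inclusion adding exactly one hyperplane. This induces a linear order $H_1,H_2,\ldots$ on $\mathcal{A}\setminus\mathcal{A}_\ell$, listing the hyperplanes in the order in which they are added along this chain. (ii) With respect to this linear order, if $i<j<k$ and $c$ is also incident to $\ell+(H_i\cap H_k)$, then $H_i\cap H_j=H_i\cap H_k=H_j\cap H_k$.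
   Context: A central, essential arrangement is a finite set of linear hyperplanes in $\mathbb{R}^d$ with common intersection $\{0\}$. Chambers are connected components of the complement of their union; $L_1(c,c')$ is the set of hyperplanes separating chambers $c,c'$. A coatom is a line $\ell$ that is an intersection of hyperplanes of $\mathcal{A}$; it is modular if for every pair of distinct hyperplanes $H,H'\in\mathcal{A}$ not containing $\ell$, the hyperplane $\ell+(H\cap H')$ belongs to $\mathcal{A}$. For a chamber $c$, $c/\ell$ denotes the chamber of the localized arrangement $\{H/\ell: H\in\mathcal{A}, H\supseteq\ell\}$ in $\mathbb{R}^d/\ell$ containing the image of $c$. A chamber $c$ is incident to a subspace $X$ if the closure of $c$ meets $X$ in a set of the same dimension as $X$. *)

(* R^d is modelled as 'rV[R]_d with the
   (product = Euclidean) topology of matrix_topology. *)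
From HB Require Import structures.
From mathcomp Require Import all_boot all_order all_algebra.
From mathcomp Require Import all_classical all_reals all_analysis.
Set Implicit Arguments. Unset Strict Implicit. Unset Printing Implicit Defensive.
Import Order.TTheory GRing.Theory Num.Theory.
Import numFieldNormedType.Exports.
Local Open Scope classical_set_scope.
Local Open Scope ring_scope.

Section Arrangements.
Variables (R : realType) (d : nat).
Local Notation V := 'rV[R]_d.

Definition lin (a : V) (x : V) : R := (x *m a^T) 0 0.

Definition is_hyperplane (H : set V) : Prop :=
  exists a : V, a != 0 /\ H = [set x | lin a x = 0].

Definition central_arrangement (A : set (set V)) : Prop :=
  finite_set A /\ (forall H, A H -> is_hyperplane H).

Definition essential (A : set (set V)) : Prop :=
  \bigcap_(H in A) H = [set 0].

Definition arr_union (A : set (set V)) : set V := \bigcup_(H in A) H.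

Definition chamber (A : set (set V)) (C : set V) : Prop :=
  exists x : V, ~ arr_union A x /\
    C = @connected_component V (~` arr_union A) x.

Definition separates (H c c' : set V) : Prop :=
  exists a : V, a != 0 /\ H = [set x | lin a x = 0] /\
    c `<=` [set x | 0 < lin a x] /\ c' `<=` [set x | lin a x < 0].

Definition L1 (A : set (set V)) (c c' : set V) : set (set V) :=
  [set H | A H /\ separates H c c'].

Definition is_line (l : set V) : Prop :=
  exists v : V, v != 0 /\ l = [set k *: v | k in [set: R]].

Definition is_intersection_of (A : set (set V)) (X : set V) : Prop :=
  exists S : set (set V), S `<=` A /\ X = \bigcap_(H in S) H.

Definition coatom (A : set (set V)) (l : set V) : Prop :=
  is_line l /\ is_intersection_of A l.

(* Minkowski sum of two sets (for subspaces: the subspace sum) *)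
Definition ssum (X Y : set V) : set V := [set x + y | x in X & y in Y].

Definition modular_coatom (A : set (set V)) (l : set V) : Prop :=
  coatom A l /\
  forall H H', A H -> A H' -> H <> H' -> ~ (l `<=` H) -> ~ (l `<=` H') ->
    A (ssum l (H `&` H')).

Definition localization (A : set (set V)) (l : set V) : set (set V) :=
  [set H | A H /\ l `<=` H].

(* c / l = c' / l : c and c' lie in the same chamber of the localized
   arrangement A_l (chambers of A_l/l in R^d/l correspond to chambers of
   A_l in R^d via the projection R^d -> R^d/l). *)
Definition same_loc (A : set (set V)) (l c c' : set V) : Prop :=
  exists C, chamber (localization A l) C /\ c `<=` C /\ c' `<=` C.

(* (affine) dimension of a set: S has affine dimension n when it contains
   n+1 affinely independent points but not n+2. *)
Definition aff_indep_pts (S : set V) (n : nat) : Prop :=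
  exists (p0 : V) (p : 'I_n -> V), S p0 /\ (forall i, S (p i)) /\
    row_free (\matrix_(i < n) (p i - p0)).

Definition has_dim (S : set V) (n : nat) : Prop :=
  aff_indep_pts S n /\ ~ aff_indep_pts S n.+1.

Definition incident (c X : set V) : Prop :=
  exists n, has_dim X n /\ has_dim (@closure V c `&` X) n.

End Arrangements.

(* Take [v] spanning [l] in the closure of [c] and [x0] in [c]. For a
   hyperplane [H] of [A] not containing [l], let [tau H] be its normal form
   scaled by [tau H v = -1], so that [y + tau H y *: v] lies in [H]. If
   [tau H p = tau H' p] for [H <> H'], then [p] lies in [l + (H `&` H')],
   which by modularity is a hyperplane of [A_l]; hence on the chamber of [A_l]
   containing [c] the values [tau H] are pairwise distinct and keep their
   order. Listing these hyperplanes by decreasing [tau H x0], the points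
   [x0 + s *: v] with [s] between consecutive values give the chain of
   chambers of (i), and every chamber [c'] with [c'/l = c/l] is among them.
   For (ii), that order gives [tau H_k <= tau H_j <= tau H_i] on the closure
   of [c], while [tau H_i = tau H_k] on [l + (H_i `&` H_k)]; so [tau H_j]
   agrees with them on the part of that plane in the closure of [c], hence by
   incidence on the whole plane, which forces [H_i `&` H_k] into [H_j]. *)

From HB Require Import structures.
From mathcomp Require Import all_boot all_order all_algebra.
From mathcomp Require Import all_classical all_reals all_analysis.
From mathcomp Require Import ring lra.
Set Implicit Arguments. Unset Strict Implicit. Unset Printing Implicit Defensive.
Import Order.TTheory GRing.Theory Num.Theory.
Import numFieldNormedType.Exports.
Local Open Scope classical_set_scope.
Local Open Scope ring_scope.

Section LinearForms.
Variables (R : realType) (d : nat).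
Local Notation V := 'rV[R]_d.

Lemma linE (a x : V) : lin a x = \sum_j x 0 j * a 0 j.
Proof. by rewrite /lin mxE; apply: eq_bigr => j _; rewrite mxE. Qed.

Lemma linD (a x y : V) : lin a (x + y) = lin a x + lin a y.
Proof. by rewrite /lin mulmxDl mxE. Qed.

Lemma linZ (a x : V) k : lin a (k *: x) = k * lin a x.
Proof. by rewrite /lin -scalemxAl mxE. Qed.

Lemma linN (a x : V) : lin a (- x) = - lin a x.
Proof. by rewrite -scaleN1r linZ mulN1r. Qed.

Lemma linB (a x y : V) : lin a (x - y) = lin a x - lin a y.
Proof. by rewrite linD linN. Qed.

Lemma lin0 (a : V) : lin a 0 = 0.
Proof. by rewrite /lin mul0mx mxE. Qed.

Lemma linDl (a b x : V) : lin (a + b) x = lin a x + lin b x.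
Proof. by rewrite /lin linearD /= mulmxDr mxE. Qed.

Lemma linZl (a x : V) k : lin (k *: a) x = k * lin a x.
Proof. by rewrite /lin linearZ /= -scalemxAr mxE. Qed.

Lemma linBl (a b x : V) : lin (a - b) x = lin a x - lin b x.
Proof. by rewrite linDl -scaleN1r linZl mulN1r. Qed.

Lemma lin0l (x : V) : lin 0 x = 0.
Proof. by rewrite /lin trmx0 mulmx0 mxE. Qed.

Lemma lin_gt0 (a : V) : a != 0 -> 0 < lin a a.
Proof.
have sq_ge0 i : 0 <= a 0 i * a 0 i by rewrite -expr2 sqr_ge0.
move=> a0; rewrite linE lt0r sumr_ge0 ?andbT //.
apply: contra a0 => /eqP /psumr_eq0P a2_eq0; apply/eqP/rowP => j; rewrite mxE.
by apply/eqP; rewrite -sqrf_eq0 expr2 a2_eq0.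
Qed.

Lemma lin_mul (a : V) n (u : 'rV[R]_n) (M : 'M[R]_(n, d)) :
  lin a (u *m M) = \sum_i u 0 i * lin a (row i M).
Proof.
rewrite /lin -mulmxA mxE; apply: eq_bigr => i _.
by rewrite -row_mul [in RHS]mxE.
Qed.

Lemma lin_continuous (a : V) : continuous (lin a).
Proof.
have -> : lin a = (fun x : V => \sum_(j <- index_enum 'I_d | true)
    (fun j x => x 0 j * a 0 j) j x).
  by apply: funext => x; rewrite linE.
apply: continuous_big => //; last first.
  move=> j _ x; apply: continuousM; first exact: coord_continuous.
  exact: cst_continuous.
move=> [x y]; apply: cvgD; [exact: cvg_fst | exact: cvg_snd].
Qed.

Lemma lin_factor (f g : V) : g != 0 ->
  (forall x, lin g x = 0 -> lin f x = 0) ->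
  forall x, lin f x = (lin f g / lin g g) * lin g x.
Proof.
move=> g0 kerS x; have gg := lin_gt0 g0.
have := kerS (x - (lin g x / lin g g) *: g).
rewrite !linB !linZ mulfVK ?gt_eqF // subrr => /(_ erefl) /eqP.
by rewrite subr_eq0 => /eqP ->; rewrite [LHS]mulrC mulrA mulrAC.
Qed.

End LinearForms.

Section Hyperplanes.
Variables (R : realType) (d : nat).
Local Notation V := 'rV[R]_d.
Local Notation ker a := [set x : V | lin a x = 0].

Lemma ker_sub_eq (a b : V) : a != 0 -> b != 0 -> ker a `<=` ker b -> ker a = ker b.
Proof.
move=> a0 b0 sab; have E := lin_factor a0 sab.
set al := lin b a / lin a a in E.
have al0 : al != 0 by apply: contraTneq (lin_gt0 b0) => al0; rewrite E al0 mul0r ltxx.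
apply/seteqP; split => // x /= bx; apply/eqP.
by move: bx; rewrite E => /eqP; rewrite mulf_eq0 (negbTE al0).
Qed.

Lemma ker_neq_witness (a b : V) : a != 0 -> b != 0 -> ker a <> ker b ->
  exists u, lin a u = 0 /\ lin b u != 0.
Proof.
move=> a0 b0 ne; apply: contrapT => nex; apply: ne; apply: ker_sub_eq => // x /= ax.
by apply: contrapT => bx; apply: nex; exists x; split => //; apply/eqP.
Qed.

(* If [H1 `&` H3] lies in [H2], the three forms are linearly dependent:
   [a2 = be a1 + ga a3] with [be, ga] nonzero since the hyperplanes differ. *)
Lemma hyperplaneI3_eq (H1 H2 H3 : set V) :
  is_hyperplane H1 -> is_hyperplane H2 -> is_hyperplane H3 ->
  H1 <> H2 -> H1 <> H3 -> H2 <> H3 -> H1 `&` H3 `<=` H2 ->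
  H1 `&` H2 = H1 `&` H3 /\ H1 `&` H3 = H2 `&` H3.
Proof.
move=> [a1 [a10 ->]] [a2 [a20 ->]] [a3 [a30 ->]] n12 n13 n23 sub.
have [u [u1 u3]] := ker_neq_witness a10 a30 n13.
pose ga := lin a2 u / lin a3 u.
have E1 x : lin a1 x = 0 -> lin (a2 - ga *: a3) x = 0.
  move=> x1; rewrite linBl linZl.
  have := sub (x - (lin a3 x / lin a3 u) *: u).
  rewrite /= !linB !linZ x1 u1 mulr0 subr0 mulfVK // subrr => /(_ (conj erefl erefl)).
  move/eqP; rewrite subr_eq0 => /eqP ->.
  by rewrite /ga mulrAC [X in _ - X]mulrC mulrA subrr.
have E2 := lin_factor a10 E1; set be := _ / _ in E2.
have E x : lin a2 x = be * lin a1 x + ga * lin a3 x.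
  by rewrite -E2 linBl linZl subrK.
have ga0 : ga != 0.
  apply/eqP => g0; apply: n12; apply: ker_sub_eq => // x /= x1.
  by rewrite E x1 g0 !mul0r mulr0 addr0.
have be0 : be != 0.
  apply/eqP => b0; apply: n23; apply/esym; apply: ker_sub_eq => // x /= x3.
  by rewrite E x3 b0 !mul0r mulr0 addr0.
split; apply/seteqP; split => x /= [].
- by move=> x1 /eqP; rewrite E x1 mulr0 add0r mulf_eq0 (negbTE ga0) => /eqP x3.
- by move=> x1 x3; rewrite E x1 x3 !mulr0 addr0.
- by move=> x1 x3; rewrite E x1 x3 !mulr0 addr0.
- by move=> /eqP + x3; rewrite E x3 mulr0 addr0 mulf_eq0 (negbTE be0) => /eqP x1.
Qed.

Lemma hyperplane_normal_neq0 (H : set V) a : is_hyperplane H -> H = ker a -> a != 0.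
Proof.
move=> [b [b0 Hb]] Ha; apply/eqP => a0.
have : H b by rewrite Ha a0; exact: lin0l.
by rewrite Hb /= => /eqP; rewrite gt_eqF // lin_gt0.
Qed.

Lemma hyperplane_normal_prop (H : set V) a b : is_hyperplane H ->
  H = ker a -> H = ker b -> exists2 al, al != 0 & forall x, lin a x = al * lin b x.
Proof.
move=> hH Ha Hb.
have a0 := hyperplane_normal_neq0 hH Ha; have b0 := hyperplane_normal_neq0 hH Hb.
have E : forall x, lin a x = (lin a b / lin b b) * lin b x.
  apply: lin_factor => // x bx.
  have : H x by rewrite Hb.
  by rewrite Ha.
exists (lin a b / lin b b) => //; apply/eqP => al0.
by have := lin_gt0 a0; rewrite E al0 mul0r ltxx.
Qed.

Lemma hyperplaneD (H : set V) x y : is_hyperplane H -> H x -> H y -> H (x + y).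
Proof. by move=> [a [_ ->]] /= ax ay; rewrite linD ax ay addr0. Qed.

Definition nrm (H : set V) : V := xget 0 (fun a : V => a != 0 /\ H = ker a).

Lemma nrmP H : is_hyperplane H -> nrm H != 0 /\ H = ker (nrm H).
Proof.
by move=> [a Ha]; apply: (xgetPex 0 (P := fun a : V => a != 0 /\ H = ker a)); exists a.
Qed.

Lemma closure_lin_ge0 (c : set V) b y : (forall z, c z -> 0 <= lin b z) ->
  closure c y -> 0 <= lin b y.
Proof.
move=> cb cy.
have cl : closed (lin b @^-1` [set r : R | 0 <= r]).
  by apply: preimage_closed; [move=> z _; exact: lin_continuous | exact: closed_ge].
have : closure (lin b @^-1` [set r : R | 0 <= r]) y by apply: closureS cy.
by rewrite -(closure_id _).1.
Qed.

End Hyperplanes.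

Section Cells.
Variables (R : realType) (d : nat).
Local Notation V := 'rV[R]_d.
Local Notation ker a := [set x : V | lin a x = 0].

Definition cell (A : set (set V)) (x : V) : set V :=
  [set y | forall H a, A H -> H = ker a -> 0 < lin a x * lin a y].

Lemma pmul_trans (p q r : R) : 0 < p * q -> 0 < q * r -> 0 < p * r.
Proof.
move=> pq qr; have : 0 < (p * q) * (q * r) by apply: mulr_gt0.
rewrite mulrA -(mulrA p) -expr2 mulrAC => h.
have q0 : q != 0 by apply: contraTneq pq => ->; rewrite mulr0 ltxx.
have q2 : 0 < q ^+ 2 by rewrite exprn_even_gt0 // q0 orbT.
by rewrite -(pmulr_lgt0 _ q2).
Qed.

Lemma sign_change_root (p q : R) : p * q < 0 ->
  let t := p / (p - q) in 0 <= t <= 1 /\ (1 - t) * p + t * q = 0.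
Proof.
move=> neg t.
have D0 : p - q != 0 by apply: contraTneq neg => /eqP; rewrite subr_eq0 => /eqP ->; nra.
split; last by rewrite /t; field.
have [hp|hp] := ltP 0 p.
- have Dp : 0 < p - q by nra.
  apply/andP; split; first by apply: divr_ge0; apply: ltW.
  by rewrite /t ler_pdivrMr // mul1r; nra.
- have Dp : 0 < - (p - q) by nra.
  rewrite /t -divrNN; apply/andP; split; first by apply: divr_ge0; nra.
  by rewrite ler_pdivrMr // mul1r; nra.
Qed.

Variable A : set (set V).

Lemma cell_sym x y : cell A x y -> cell A y x.
Proof. by move=> cy H a AH Ha; rewrite mulrC; exact: (cy H a AH Ha). Qed.

Lemma cell_trans x y z : cell A x y -> cell A y z -> cell A x z.
Proof. by move=> cy cz H a AH Ha; exact: pmul_trans (cy H a AH Ha) (cz H a AH Ha). Qed.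

Lemma cell_eq x y : cell A x y -> cell A x = cell A y.
Proof.
move=> cy; apply/seteqP; split => z cz.
- exact: cell_trans (cell_sym cy) cz.
- exact: cell_trans cy cz.
Qed.

Lemma cell_convex x y z t : cell A x y -> cell A x z -> 0 <= t <= 1 ->
  cell A x ((1 - t) *: y + t *: z).
Proof.
move=> cy cz /andP[t0 t1] H a AH Ha; rewrite linD !linZ mulrDr.
have hy := cy H a AH Ha; have hz := cz H a AH Ha.
rewrite le_eqVlt in t0; case/orP: t0 => [/eqP <-|t0].
  by rewrite subr0 mul0r mul1r mulr0 addr0.
rewrite le_eqVlt in t1; case/orP: t1 => [/eqP ->|t1].
  by rewrite subrr mul0r mul1r mulr0 add0r.
by apply: addr_gt0; rewrite mulrCA mulr_gt0 // subr_gt0.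
Qed.

Lemma cell_self x : ~ arr_union A x -> cell A x x.
Proof.
move=> nx H a AH Ha; rewrite -expr2 exprn_even_gt0 //.
by apply/eqP => ax; apply: nx; exists H => //; rewrite Ha.
Qed.

Hypothesis hA : forall H, A H -> is_hyperplane H.

Lemma cell_compl x y : cell A x y -> ~ arr_union A y.
Proof.
move=> cy [H AH Hy]; have [a [a0 Ha]] := hA AH.
by have := cy H a AH Ha; move: Hy; rewrite Ha /= => ->; rewrite mulr0 ltxx.
Qed.

Lemma cell_sub_component x : ~ arr_union A x ->
  cell A x `<=` connected_component (~` arr_union A) x.
Proof.
move=> nx y cy; pose f t : V := (1 - t) *: x + t *: y.
have cf : continuous f.
  move=> t; apply: cvgD; apply: cvgZr_tmp; last exact: cvg_id.
  by apply: cvgB; [exact: cvg_cst | exact: cvg_id].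
have S : connected (f @` `[0, 1]).
  apply: connected_continuous_connected; first exact: segment_connected.
  by move=> t; apply: continuous_subspaceT.
apply: (connected_component_max (B := f @` `[0, 1])) => //.
- exists 0; first by rewrite /= in_itv /= lexx ler01.
  by rewrite /f subr0 scale1r scale0r addr0.
- move=> _ [t t01 <-]; apply: (@cell_compl x).
  by apply: cell_convex; [exact: cell_self | exact: cy | move: t01; rewrite /= in_itv].
- exists 1; first by rewrite /= in_itv /= lexx ler01.
  by rewrite /f subrr scale0r scale1r add0r.
Qed.

(* A form that does not vanish on the connected component keeps its sign
   there, its image being an interval. *)
Lemma component_sub_cell x : ~ arr_union A x ->
  connected_component (~` arr_union A) x `<=` cell A x.
Proof.
move=> nx y Ky H a AH Ha; set K := connected_component _ x in Ky.
have Kx : K x by exact: connected_component_refl.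
have I : is_interval (lin a @` K).
  apply/connected_intervalP; apply: connected_continuous_connected.
    exact: connected.component_connected.
  by move=> z; apply: continuous_subspaceT; exact: lin_continuous.
have n0 z : K z -> lin a z != 0.
  move=> Kz; apply/eqP => az; apply: (connected_component_sub Kz).
  by exists H => //; rewrite Ha.
have ax := n0 _ Kx; have ay := n0 _ Ky.
rewrite lt0r mulf_neq0 //=; apply: contraT; rewrite -ltNge => neg.
have : (lin a @` K) 0.
  case: (ltP (lin a x) 0) => hx.
  - by apply: (I (lin a x) (lin a y)); [exact: imageP | exact: imageP | rewrite ltW //=; nra].
  - by apply: (I (lin a y) (lin a x)); [exact: imageP | exact: imageP | rewrite hx andbT; nra].
by case=> z Kz az; move: (n0 _ Kz); rewrite az eqxx.
Qed.

Lemma chamberP c : chamber A c <-> exists x, ~ arr_union A x /\ c = cell A x.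
Proof.
split => -[x [nx ->]]; exists x; split => //; apply/seteqP; split;
  by [exact: component_sub_cell | exact: cell_sub_component].
Qed.

Lemma separatesP x y H a : ~ arr_union A x -> ~ arr_union A y -> A H -> H = ker a ->
  (separates H (cell A x) (cell A y) <-> lin a x * lin a y < 0).
Proof.
move=> nx ny AH Ha; split.
- move=> [b [b0 [Hb [sx sy]]]].
  have bx : 0 < lin b x := sx x (cell_self nx).
  have by_ : lin b y < 0 := sy y (cell_self ny).
  have [al al0 E] := hyperplane_normal_prop (hA AH) Ha Hb.
  rewrite !E mulrACA -expr2 pmulr_rlt0 ?exprn_even_gt0 ?al0 ?orbT //.
  by rewrite pmulr_rlt0.
- move=> neg; have a0 := hyperplane_normal_neq0 (hA AH) Ha.
  have [hx|hx] := ltP 0 (lin a x).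
  + exists a; split => //; split => //; split => z cz /=; have := cz H a AH Ha.
      by rewrite pmulr_rgt0.
    by rewrite nmulr_rgt0 // -(pmulr_rlt0 _ hx).
  + have hx' : lin a x < 0.
      by rewrite lt_neqAle hx andbT; apply: contraTneq neg => ->; rewrite mul0r ltxx.
    exists (- a); split; first by rewrite oppr_eq0.
    split.
      rewrite Ha; apply/seteqP; split => z /=; rewrite -scaleN1r linZl.
        by move=> ->; rewrite mulr0.
      by move/eqP; rewrite mulf_eq0 oppr_eq0 oner_eq0 /= => /eqP.
    split => z cz /=; rewrite -scaleN1r linZl mulN1r; have := cz H a AH Ha.
      by rewrite oppr_gt0 nmulr_rgt0.
    by rewrite oppr_lt0 pmulr_rgt0 // -(nmulr_rlt0 _ hx').
Qed.

End Cells.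

Section AffineDimension.
Variables (R : realType) (d : nat).
Local Notation V := 'rV[R]_d.

Lemma widen_lift n (i : 'I_n) : widen_ord (leqnSn n) i = lift ord_max i.
Proof. by apply: val_inj; rewrite /= /bump leqNgt ltn_ord. Qed.

Lemma aff_indep_extend (K : set V) n p0 (p : 'I_n -> V) z :
  K p0 -> (forall i, K (p i)) -> K (p0 + z) ->
  row_free (\matrix_(i < n) (p i - p0)) ->
  ~ (exists u, z = u *m \matrix_(i < n) (p i - p0)) -> aff_indep_pts K n.+1.
Proof.
move=> Kp0 Kp Kz rf nz.
pose q (i : 'I_n.+1) := if unlift ord_max i is Some i' then p i' else p0 + z.
exists p0, q; split => //; split.
  by move=> i; rewrite /q; case: unliftP.
apply: inj_row_free => w Hw; set M := \matrix_(i < n) (p i - p0) in rf nz.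
pose w' : 'rV_n := \row_i w 0 (widen_ord (leqnSn n) i).
have E : w *m \matrix_(i < n.+1) (q i - p0) = w' *m M + w 0 ord_max *: z.
  rewrite !mulmx_sum_row big_ord_recr /=; congr (_ + _).
    by apply: eq_bigr => i _; rewrite !rowK mxE widen_lift /q liftK.
  by rewrite rowK /q unlift_none addrC addKr.
rewrite E in Hw.
have wm0 : w 0 ord_max = 0.
  apply: contrapT => /eqP wm; apply: nz.
  exists ((- (w 0 ord_max)^-1) *: w'); rewrite -scalemxAl.
  have -> : w' *m M = - (w 0 ord_max *: z) by apply/eqP; rewrite -addr_eq0 Hw.
  by rewrite scalerN scaleNr opprK scalerA mulVf // scale1r.
rewrite wm0 scale0r addr0 in Hw.
have w'0 : w' = 0 by apply/eqP; rewrite -(mulmx_free_eq0 _ rf) Hw.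
apply/rowP => i; rewrite mxE; case: (unliftP ord_max i) => [i' ->|->] //.
by rewrite -widen_lift; have := congr1 (fun u : 'rV_n => u 0 i') w'0; rewrite !mxE.
Qed.

(* Maximality of the independent family puts [z] in the span of the [p i - p0]. *)
Lemma lin_eq0_dim (K : set V) n p0 (p : 'I_n -> V) g z :
  K p0 -> (forall i, K (p i)) -> row_free (\matrix_(i < n) (p i - p0)) ->
  ~ aff_indep_pts K n.+1 -> lin g p0 = 0 -> (forall i, lin g (p i) = 0) ->
  K (p0 + z) -> lin g z = 0.
Proof.
move=> Kp0 Kp rf nK g0 gp Kz.
have [[u ->]|nz] := pselect (exists u, z = u *m \matrix_(i < n) (p i - p0)).
  by rewrite lin_mul big1 // => i _; rewrite rowK linB g0 gp subrr mulr0.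
by case: nK; exact: aff_indep_extend Kz rf nz.
Qed.

Lemma line_closure_generator (l c : set V) (v : V) :
  v != 0 -> l = [set k *: v | k in [set: R]] -> incident c l ->
  exists w, l = [set k *: w | k in [set: R]] /\ closure c w.
Proof.
move=> v0 hl [n [[_ nLn] [[q0 [q [Cq0 [Cq rf]]]] _]]].
case: n q Cq rf nLn => [|n] q Cq rf nLn.
  exfalso; apply: nLn; exists 0, (fun _ => v); split.
    by rewrite hl; exists 0 => //; rewrite scale0r.
  split; first by move=> _; rewrite hl; exists 1 => //; rewrite scale1r.
  apply: inj_row_free => u; rewrite mulmx_sum_row big_ord1 rowK subr0 => /eqP.
  rewrite scaler_eq0 (negbTE v0) orbF => /eqP u0.
  by apply/rowP => i; rewrite ord1 u0 mxE.
have r0 : q ord0 - q0 != 0.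
  apply/eqP => e.
  have : row ord0 (\matrix_i (q i - q0)) == 0 by rewrite rowK e.
  rewrite rowE (mulmx_free_eq0 _ rf) => /eqP /matrixP /(_ 0 ord0).
  by rewrite !mxE !eqxx /= => /eqP; rewrite oner_eq0.
have [w [w0 lw cw]] : exists w, [/\ w != 0, l w & closure c w].
  have [e|n0] := eqVneq q0 0.
    exists (q ord0); split; [|exact: (Cq ord0).2|exact: (Cq ord0).1].
    by move: r0; rewrite e subr0.
  by exists q0; split => //; [exact: Cq0.2 | exact: Cq0.1].
exists w; split => //.
move: lw; rewrite hl => -[k _ ek].
have k0 : k != 0 by apply: contra w0; rewrite -ek => /eqP ->; rewrite scale0r.
apply/seteqP; split => x /= [k' _ <-].
- by exists (k' / k) => //; rewrite -ek scalerA mulfVK.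
- by exists (k' * k) => //; rewrite -ek scalerA.
Qed.

End AffineDimension.

Section Chain.
Variables (R : realType) (d : nat).
Local Notation V := 'rV[R]_d.
Local Notation ker a := [set x : V | lin a x = 0].
Variables (A : set (set V)) (l : set V) (v x0 : V) (s0 : seq (set V)).
Hypothesis hA : forall H, A H -> is_hyperplane H.
Hypothesis hl : l = [set k *: v | k in [set: R]].
Hypothesis hmod : forall H H', A H -> A H' -> H <> H' -> ~ l `<=` H -> ~ l `<=` H' ->
  A (ssum l (H `&` H')).
Hypothesis hx0 : ~ arr_union A x0.
Hypothesis hvc : closure (cell A x0) v.
Hypothesis hs0 : A = [set` s0].
Local Notation Al := (localization A l).

Lemma l_subP H a : H = ker a -> (l `<=` H <-> lin a v = 0).
Proof.
move=> ->; rewrite hl; split.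
- by move=> /(_ v); apply; exists 1 => //; rewrite scale1r.
- by move=> av _ [k _ <-] /=; rewrite linZ av mulr0.
Qed.

Lemma lin_v_neq0 H a : H = ker a -> ~ l `<=` H -> lin a v != 0.
Proof. by move=> Ha nl; apply/eqP => /(l_subP Ha). Qed.

Lemma lin_x0_neq0 H a : A H -> H = ker a -> lin a x0 != 0.
Proof. by move=> AH Ha; apply/eqP => e; apply: hx0; exists H => //; rewrite Ha. Qed.

(* The normal of [H] scaled so that [y + tau H y *: v] lies in [H]. *)
Definition lnormal H : V := (- (lin (nrm H) v)^-1) *: nrm H.
Local Notation tau H y := (lin (lnormal H) y).

Lemma tau_v H : A H -> ~ l `<=` H -> tau H v = -1.
Proof.
move=> AH nl; have [_ Hn] := nrmP (hA AH).
by rewrite /lnormal linZl mulNr mulVf // (lin_v_neq0 Hn nl).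
Qed.

Lemma tau_eq0 H z : A H -> H z -> tau H z = 0.
Proof.
move=> AH; have [_ Hn] := nrmP (hA AH).
by rewrite /lnormal linZl {1}Hn /= => ->; rewrite mulr0.
Qed.

Lemma lin_tau H a y : A H -> H = ker a -> ~ l `<=` H ->
  lin a y = - tau H y * lin a v.
Proof.
move=> AH Ha nl; have [_ Hn] := nrmP (hA AH).
have [al _ E] := hyperplane_normal_prop (hA AH) Ha Hn.
have nv := lin_v_neq0 Hn nl.
by rewrite /lnormal linZl !E; field.
Qed.

Lemma tau_addv H y : A H -> ~ l `<=` H -> H (y + tau H y *: v).
Proof.
move=> AH nl; have [_ Hn] := nrmP (hA AH).
by rewrite {1}Hn /= linD linZ (lin_tau y AH Hn nl); ring.
Qed.

Lemma lin_x0_v_gt0 H a : A H -> H = ker a -> ~ l `<=` H -> 0 < lin a x0 * lin a v.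
Proof.
move=> AH Ha nl.
have : 0 <= lin (lin a x0 *: a) v.
  apply: (closure_lin_ge0 _ hvc) => z cz.
  by rewrite linZl ltW //; exact: cz H a AH Ha.
by rewrite linZl le0r mulf_eq0 (negbTE (lin_x0_neq0 AH Ha)) (negbTE (lin_v_neq0 Ha nl)).
Qed.

Lemma tau_x0_lt0 H : A H -> ~ l `<=` H -> tau H x0 < 0.
Proof.
move=> AH nl; have [_ Hn] := nrmP (hA AH).
have := lin_x0_v_gt0 AH Hn nl; rewrite (lin_tau x0 AH Hn nl).
have nv := lin_v_neq0 Hn nl.
have : 0 < lin (nrm H) v * lin (nrm H) v by rewrite -expr2 exprn_even_gt0 // nv orbT.
nra.
Qed.

Lemma x0_notin_Al : ~ arr_union Al x0.
Proof. by move=> [H [AH _] Hx]; apply: hx0; exists H. Qed.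

Lemma cell_Al y : cell A x0 y -> cell Al x0 y.
Proof. by move=> cy H a [AH _] Ha; exact: (cy H a AH Ha). Qed.

Lemma Al_hyperplane H : Al H -> is_hyperplane H.
Proof. by move=> [AH _]; exact: hA. Qed.

(* Modularity: equal [tau] values at [p] would put [p] on the hyperplane
   [l + (H `&` H')] of [Al]. *)
Lemma tau_neq_Al H H' p : A H -> A H' -> H <> H' -> ~ l `<=` H -> ~ l `<=` H' ->
  cell Al x0 p -> tau H p != tau H' p.
Proof.
move=> AH AH' ne nl nl' cp; apply/eqP => e.
have [_ Hn] := nrmP (hA AH); have [_ Hn'] := nrmP (hA AH').
apply: (cell_compl Al_hyperplane cp); exists (ssum l (H `&` H')); last first.
  exists (- tau H p *: v); first by rewrite hl; exists (- tau H p).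
  exists (p + tau H p *: v); last by rewrite scaleNr addrCA addNr addr0.
  by split; [|rewrite e]; exact: tau_addv.
split; first exact: hmod.
move=> y ly; exists y => //; exists 0; last by rewrite addr0.
by rewrite Hn Hn' /=; split; exact: lin0.
Qed.

Lemma lin_sign_Al b y : (forall p, cell Al x0 p -> lin b p != 0) ->
  cell Al x0 y -> 0 < lin b x0 * lin b y.
Proof.
move=> nz cy; have cx := cell_self x0_notin_Al.
rewrite lt0r mulf_neq0 ?nz //= leNgt; apply/negP => neg.
have [t01 e] := sign_change_root neg.
by have := nz _ (cell_convex cx cy t01); rewrite linD !linZ e eqxx.
Qed.

Lemma tau_order_Al H H' y : A H -> A H' -> H <> H' -> ~ l `<=` H -> ~ l `<=` H' ->
  cell Al x0 y -> 0 < (tau H x0 - tau H' x0) * (tau H y - tau H' y).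
Proof.
move=> AH AH' ne nl nl' cy.
have := @lin_sign_Al (lnormal H - lnormal H') y; rewrite !linBl; apply => // p cp.
by rewrite linBl subr_eq0; exact: tau_neq_Al.
Qed.

Definition off_l (H : set V) : bool := `[< A H /\ ~ l `<=` H >].
Definition tau_ge (H H' : set V) : bool := tau H' x0 <= tau H x0.

Definition chain_hyps := sort tau_ge (undup (seq.filter off_l s0)).
Local Notation m := (size chain_hyps).
Local Notation Hs k := (nth set0 chain_hyps k).
Local Notation tx k := (tau (Hs k) x0).

Lemma mem_chain_hyps H : H \in chain_hyps <-> A H /\ ~ l `<=` H.
Proof.
rewrite mem_sort mem_undup mem_filter /off_l; split.
- by case/andP => /asboolP.
- by move=> h; rewrite (asboolT h) /=; move: h.1; rewrite hs0.
Qed.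

Lemma HsP k : (k < m)%N -> A (Hs k) /\ ~ l `<=` Hs k.
Proof. by move=> km; apply/mem_chain_hyps; exact: mem_nth. Qed.

Lemma Hs_inj i j : (i < m)%N -> (j < m)%N -> Hs i = Hs j -> i = j.
Proof.
have uniq_hyps : uniq chain_hyps by rewrite sort_uniq undup_uniq.
by move=> im jm e; apply/eqP; rewrite -(nth_uniq set0 im jm uniq_hyps) e.
Qed.

Lemma Hs_neq i j : (i < j)%N -> (j < m)%N -> Hs i <> Hs j.
Proof.
by move=> ij jm /(Hs_inj (ltn_trans ij jm) jm) e; move: ij; rewrite e ltnn.
Qed.

Lemma Hs_index H : A H -> ~ l `<=` H ->
  (index H chain_hyps < m)%N /\ H = Hs (index H chain_hyps).
Proof.
move=> AH nl; have Hin : H \in chain_hyps by apply/mem_chain_hyps.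
by rewrite index_mem nth_index.
Qed.

Lemma tx_lt i j : (i < j)%N -> (j < m)%N -> tx j < tx i.
Proof.
move=> ij jm; have im := ltn_trans ij jm.
have tr : transitive tau_ge.
  by move=> b a c; rewrite /tau_ge => h1 h2; exact: le_trans h2 h1.
have srt : sorted tau_ge chain_hyps by apply: sort_sorted => a b; exact: le_total.
have le : tau_ge (Hs i) (Hs j) by apply: (sorted_ltn_nth tr set0 srt); rewrite ?inE.
rewrite lt_neqAle (le : tx j <= tx i) andbT.
have [Ai nli] := HsP im; have [Aj nlj] := HsP jm.
by apply: tau_neq_Al (cell_self x0_notin_Al) => // /esym; exact: Hs_neq.
Qed.

Lemma tx_le i j : (i <= j)%N -> (j < m)%N -> tx j <= tx i.
Proof. by rewrite leq_eqVlt => /orP [/eqP -> //|ij] jm; exact/ltW/tx_lt. Qed.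

(* A value strictly between [tx k.-1] and [tx k]; at the ends [0 > tx 0] and
   [tx m.-1 - 1] are used. *)
Definition chain_coord k :=
  if k == 0%N then 0 else if (k < m)%N then (tx k.-1 + tx k) / 2 else tx k.-1 - 1.

Definition chain_pt k := x0 + chain_coord k *: v.

Definition chain k := cell A (chain_pt k).

Lemma chain_pt0 : chain_pt 0 = x0.
Proof. by rewrite /chain_pt /chain_coord eqxx scale0r addr0. Qed.

Lemma chain_coord_lt j k : (j < k)%N -> (k <= m)%N -> chain_coord k < tx j.
Proof.
move=> jk km; rewrite /chain_coord.
case: eqP => [k0|/eqP k0]; first by move: jk; rewrite k0.
have k1 : k.-1.+1 = k by rewrite prednK // lt0n.
have jk1 : (j <= k.-1)%N by rewrite -ltnS k1.
have k1m : (k.-1 < m)%N by rewrite k1.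
have := tx_le jk1 k1m; case: ifP => km' h; last lra.
by have := tx_lt (ltnSn k.-1); rewrite k1 => /(_ km'); lra.
Qed.

Lemma chain_coord_gt j k : (k <= j)%N -> (j < m)%N -> tx j < chain_coord k.
Proof.
move=> kj jm; have km := leq_ltn_trans kj jm.
rewrite /chain_coord; case: eqP => [_|/eqP k0].
  by have [] := HsP jm; exact: tau_x0_lt0.
have := tx_lt (ltnSn k.-1); rewrite prednK ?lt0n // km => /(_ erefl).
by have := tx_le kj jm; lra.
Qed.

Lemma chain_coord_neq j k : (k <= m)%N -> (j < m)%N -> chain_coord k != tx j.
Proof.
move=> km jm; case: (ltnP j k) => h.
- by rewrite lt_eqF // chain_coord_lt.
- by rewrite gt_eqF // chain_coord_gt.
Qed.

Lemma lin_chain_pt_l H a k : H = ker a -> l `<=` H -> lin a (chain_pt k) = lin a x0.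
Proof. by move=> Ha /(l_subP Ha) av; rewrite linD linZ av mulr0 addr0. Qed.

Lemma lin_chain_pt H a k : A H -> H = ker a -> ~ l `<=` H ->
  lin a (chain_pt k) = (chain_coord k - tau H x0) * lin a v.
Proof. by move=> AH Ha nl; rewrite linD linZ (lin_tau x0 AH Ha nl); ring. Qed.

Lemma chain_pt_notin k : (k <= m)%N -> ~ arr_union A (chain_pt k).
Proof.
move=> km [H AH]; have [_ Hn] := nrmP (hA AH); rewrite {1}Hn /=.
have [lH|nl] := pselect (l `<=` H).
  by rewrite (lin_chain_pt_l _ Hn lH); apply/eqP; exact: lin_x0_neq0 AH Hn.
have [jm Hj] := Hs_index AH nl.
rewrite (lin_chain_pt _ AH Hn nl) => /eqP; rewrite mulf_eq0 (negbTE (lin_v_neq0 Hn nl)).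
by rewrite orbF subr_eq0 Hj (negbTE (chain_coord_neq km jm)).
Qed.

Lemma chain_pt_sepP k H a : (k <= m)%N -> A H -> H = ker a ->
  (lin a x0 * lin a (chain_pt k) < 0 <->
   exists j, [/\ (j < k)%N, (j < m)%N & H = Hs j]).
Proof.
move=> km AH Ha; have [lH|nl] := pselect (l `<=` H).
  rewrite (lin_chain_pt_l _ Ha lH) -expr2 ltNge sqr_ge0; split => // -[j [_ jm Hj]].
  by have [_] := HsP jm; rewrite -Hj.
have [jm Hj] := Hs_index AH nl; have o := lin_x0_v_gt0 AH Ha nl.
rewrite (lin_chain_pt _ AH Ha nl) mulrCA pmulr_llt0 // subr_lt0; split.
- move=> h; exists (index H chain_hyps); split => //.
  by rewrite ltnNge; apply: contraTN h => kj; rewrite -leNgt Hj ltW // chain_coord_gt.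
- by move=> [j [jk _ ->]]; exact: chain_coord_lt.
Qed.

Lemma chain_pt_same_side k H a : (k <= m)%N -> A H -> H = ker a ->
  ~ (exists j, [/\ (j < k)%N, (j < m)%N & H = Hs j]) ->
  0 < lin a x0 * lin a (chain_pt k).
Proof.
move=> km AH Ha nex; have ax := lin_x0_neq0 AH Ha.
have ak : lin a (chain_pt k) != 0.
  by apply/eqP => e; apply: (chain_pt_notin km); exists H => //; rewrite Ha.
by rewrite lt0r mulf_neq0 //= leNgt; apply/negP => /(chain_pt_sepP km AH Ha).
Qed.

Lemma L1_chain k : (k <= m)%N ->
  L1 A (cell A x0) (chain k) = [set H | exists j, [/\ (j < k)%N, (j < m)%N & H = Hs j]].
Proof.
move=> km; apply/seteqP; split => H /=.
- move=> [AH sep]; have [_ Hn] := nrmP (hA AH).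
  by apply/(chain_pt_sepP km AH Hn); apply/(separatesP hA hx0 (chain_pt_notin km) AH Hn).
- move=> ex; have [j [_ jm Hj]] := ex; have AH : A H by rewrite Hj; exact: (HsP jm).1.
  have [_ Hn] := nrmP (hA AH); split => //.
  by apply/(separatesP hA hx0 (chain_pt_notin km) AH Hn); exact/(chain_pt_sepP km AH Hn).
Qed.

Lemma L1_chain0 : L1 A (cell A x0) (chain 0) = set0.
Proof. by rewrite L1_chain //; apply/seteqP; split => H // [j []]. Qed.

Lemma L1_chainS k : (k < m)%N ->
  ~ L1 A (cell A x0) (chain k) (Hs k) /\
  L1 A (cell A x0) (chain k.+1) = L1 A (cell A x0) (chain k) `|` [set Hs k].
Proof.
move=> km; rewrite !L1_chain //; last exact: ltnW.
split.
  by move=> [j [jk jm /(Hs_inj km jm) kj]]; move: jk; rewrite kj ltnn.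
apply/seteqP; split => H /=.
- move=> [j [+ jm ->]]; rewrite ltnS leq_eqVlt => /orP [/eqP ->|jk]; first by right.
  by left; exists j.
- by case => [[j [jk jm ->]]|->]; [exists j; rewrite ltnW | exists k].
Qed.

Lemma L1_chain_last : L1 A (cell A x0) (chain m) = A `\` Al.
Proof.
rewrite L1_chain //; apply/seteqP; split => H /=.
- by move=> [j [_ jm ->]]; have [AH nl] := HsP jm; split => // -[_].
- move=> [AH nAl]; have nl : ~ l `<=` H by move=> lH; apply: nAl.
  by have [jm Hj] := Hs_index AH nl; exists (index H chain_hyps).
Qed.

Lemma chain_chamber k : (k <= m)%N ->
  chamber A (chain k) /\ same_loc A l (chain k) (cell A x0).
Proof.
move=> km; split.
  by apply/(chamberP hA); exists (chain_pt k); split => //; exact: chain_pt_notin.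
exists (cell Al x0); split.
  by apply/(chamberP Al_hyperplane); exists x0; split => //; exact: x0_notin_Al.
split; last exact: cell_Al.
move=> y cy H a [AH lH] Ha; have := cy H a AH Ha.
by rewrite (lin_chain_pt_l _ Ha lH).
Qed.

Lemma chain_inj i j : (i <= m)%N -> (j <= m)%N -> chain i = chain j -> i = j.
Proof.
wlog ij : i j / (i <= j)%N.
  move=> W im jm e; have [h|h] := leqP i j; first exact: W.
  by apply/esym; apply: W => //; exact: ltnW.
move=> im jm e; move: ij; rewrite leq_eqVlt => /orP [/eqP //|ij]; exfalso.
have iM := leq_trans ij jm.
have [AH _] := HsP iM; have [_ Hn] := nrmP (hA AH).
have neg : lin (nrm (Hs i)) x0 * lin (nrm (Hs i)) (chain_pt j) < 0.
  by apply/(chain_pt_sepP jm AH Hn); exists i.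
have pos : 0 < lin (nrm (Hs i)) x0 * lin (nrm (Hs i)) (chain_pt i).
  apply: (chain_pt_same_side im AH Hn) => -[j' [j'i j'm /(Hs_inj iM j'm) e']].
  by move: j'i; rewrite e' ltnn.
have c : chain j (chain_pt i) by rewrite -e /chain; exact: cell_self (chain_pt_notin im).
have := pmul_trans pos (cell_sym c AH Hn).
by rewrite ltNge ltW.
Qed.

(* The index of the chamber of [y] is the number of hyperplanes [Hs j] with
   [0 < tau (Hs j) y]; as the [tau] order does not change on the chamber of
   [Al], these are exactly the first ones. *)
Lemma chain_complete_cell y : ~ arr_union A y -> cell Al x0 y ->
  exists2 k, (k <= m)%N & chain k = cell A y.
Proof.
move=> ny cy; pose k := find (fun H => tau H y <= 0) chain_hyps.
have km : (k <= m)%N by rewrite find_size.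
exists k => //; apply: cell_eq => H a AH Ha; rewrite mulrC.
have [lH|nl] := pselect (l `<=` H).
  by rewrite (lin_chain_pt_l _ Ha lH) mulrC; exact: cy H a (conj AH lH) Ha.
have [jm Hj] := Hs_index AH nl; set j := index H chain_hyps in jm Hj.
rewrite (lin_chain_pt _ AH Ha nl) (lin_tau y AH Ha nl).
have lv := lin_v_neq0 Ha nl.
have lv2 : 0 < lin a v * lin a v by rewrite -expr2 exprn_even_gt0 // lv orbT.
have ty0 : tau H y != 0.
  apply/eqP => e; apply: ny; exists H => //.
  by rewrite Ha /= (lin_tau y AH Ha nl) e oppr0 mul0r.
suff : 0 < (- tau H y) * (chain_coord k - tau H x0) by nra.
have [jk|kj] := ltnP j k.
  have := before_find set0 jk; rewrite -Hj => /negbT; rewrite -ltNge => tjy.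
  by have := chain_coord_lt jk km; rewrite -Hj; nra.
have := chain_coord_gt kj jm; rewrite -Hj => tjk.
have km' : (k < m)%N := leq_ltn_trans kj jm.
have tky : tau (Hs k) y <= 0.
  have := nth_find set0 (a := fun H => tau H y <= 0) (s := chain_hyps).
  by rewrite has_find; apply.
suff : tau H y < 0 by nra.
move: kj; rewrite leq_eqVlt => /orP [/eqP kj|kj].
  by rewrite lt_neqAle ty0 Hj -kj.
have [Ak nlk] := HsP km'.
have ne : Hs k <> H by rewrite Hj; exact: Hs_neq kj jm.
have := tau_order_Al Ak AH ne nlk nl cy.
by have := tx_lt kj jm; rewrite -Hj; nra.
Qed.

Lemma chain_complete c' : chamber A c' -> same_loc A l c' (cell A x0) ->
  exists2 k, (k <= m)%N & chain k = c'.
Proof.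
move=> /(chamberP hA) [y [ny ->]] [C [/(chamberP Al_hyperplane) [z [_ ->]] [s1 s2]]].
apply: chain_complete_cell => //.
exact: cell_trans (cell_sym (s2 _ (cell_self hx0))) (s1 _ (cell_self ny)).
Qed.

Lemma tau_closure_order i j y : (i < j)%N -> (j < m)%N ->
  closure (cell A x0) y -> tau (Hs j) y <= tau (Hs i) y.
Proof.
move=> ij jm cy; have im := ltn_trans ij jm.
have [Ai nli] := HsP im; have [Aj nlj] := HsP jm.
rewrite -subr_ge0 -linBl; apply: (closure_lin_ge0 _ cy) => z cz.
rewrite linBl; have := tau_order_Al Ai Aj (Hs_neq ij jm) nli nlj (cell_Al cz).
by have := tx_lt ij jm; nra.
Qed.

(* On [l + (Hs i `&` Hs k)] the values [tau (Hs i)] and [tau (Hs k)] agree, so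
   where this plane meets the closure of the chamber, [tau (Hs j)], squeezed
   between them, agrees with both; incidence spreads this to the whole plane. *)
Lemma Hs_meetS i j k : (i < j)%N -> (j < k)%N -> (k < m)%N ->
  incident (cell A x0) (ssum l (Hs i `&` Hs k)) -> Hs i `&` Hs k `<=` Hs j.
Proof.
move=> ij jk km [n [[_ nK] [[p0 [p [Kp0 [Kp rf]]]] _]]].
have jm := ltn_trans jk km; have im := ltn_trans ij jm.
have [Ai nli] := HsP im; have [Aj nlj] := HsP jm; have [Ak nlk] := HsP km.
have [_ Hnj] := nrmP (hA Aj).
pose g := nrm (Hs j) + lin (nrm (Hs j)) v *: lnormal (Hs i).
have tau_ssum G r w : A G -> ~ l `<=` G -> G w -> tau G (r *: v + w) = - r.
  by move=> AG nlG Gw; rewrite linD linZ tau_v // tau_eq0 // mulrN1 addr0.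
have g0 y : closure (cell A x0) y -> ssum l (Hs i `&` Hs k) y -> lin g y = 0.
  move=> cy [a]; rewrite hl => -[r _ <-] [w [wi wk] ey]; subst y.
  have := tau_closure_order ij jm cy; have := tau_closure_order jk km cy.
  rewrite (tau_ssum (Hs i)) // (tau_ssum (Hs k)) // => o1 o2.
  have tj : tau (Hs j) (r *: v + w) = - r by lra.
  by rewrite linDl linZl (lin_tau _ Aj Hnj nlj) tj (tau_ssum (Hs i)) //; ring.
move=> z [zi zk].
suff : lin g z = 0 by rewrite linDl linZl tau_eq0 // mulr0 addr0 {2}Hnj.
apply: (lin_eq0_dim Kp0.2 (fun i0 => (Kp i0).2) rf nK); first exact: g0 Kp0.1 Kp0.2.
  by move=> i0; exact: g0 (Kp i0).1 (Kp i0).2.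
have [a la [w [wi wk] <-]] := Kp0.2; move: la; rewrite hl => -[r _ <-].
exists (r *: v); first by exists r.
by exists (w + z); [split; apply: hyperplaneD => //; exact: hA | rewrite addrA].
Qed.

Lemma Hs_meet_eq i j k : (i < j)%N -> (j < k)%N -> (k < m)%N ->
  incident (cell A x0) (ssum l (Hs i `&` Hs k)) ->
  Hs i `&` Hs j = Hs i `&` Hs k /\ Hs i `&` Hs k = Hs j `&` Hs k.
Proof.
move=> ij jk km inc; have jm := ltn_trans jk km; have im := ltn_trans ij jm.
have hyp n : (n < m)%N -> is_hyperplane (Hs n) by move=> nm; exact/hA/(HsP nm).1.
apply: hyperplaneI3_eq (hyp _ im) (hyp _ jm) (hyp _ km) _ _ _ (Hs_meetS ij jk km inc).
- exact: Hs_neq ij jm.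
- exact: Hs_neq (ltn_trans ij jk) km.
- exact: Hs_neq jk km.
Qed.

End Chain.

Theorem proposition4p5 (R : realType) (d : nat)
  (A : set (set 'rV[R]_d)) (l c : set 'rV[R]_d) :
  central_arrangement A -> essential A ->
  modular_coatom A l ->
  chamber A c -> incident c l ->
  exists (t : nat) (cs : nat -> set 'rV[R]_d) (Hs : nat -> set 'rV[R]_d),
    [/\ (0 < t)%N /\ cs 0%N = c,
        (forall k, (k < t)%N -> chamber A (cs k) /\ same_loc A l (cs k) c),
        (forall c', chamber A c' -> same_loc A l c' c ->
            exists2 k, (k < t)%N & cs k = c'),
        (forall i j, (i < t)%N -> (j < t)%N -> cs i = cs j -> i = j) &
      [/\ L1 A c (cs 0%N) = set0,
          (forall k, (k.+1 < t)%N ->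
             ~ L1 A c (cs k) (Hs k) /\
             L1 A c (cs k.+1) = L1 A c (cs k) `|` [set Hs k]),
          L1 A c (cs t.-1) = A `\` localization A l &
          (forall i j k, (i < j)%N -> (j < k)%N -> (k.+1 < t)%N ->
             incident c (ssum l (Hs i `&` Hs k)) ->
             Hs i `&` Hs j = Hs i `&` Hs k /\ Hs i `&` Hs k = Hs j `&` Hs k)]].
Proof.
move=> [hfin hA] _ [[[v [v0 hl]] _] hmod] hc hinc.
have [w [hlw hwc]] := line_closure_generator v0 hl hinc.
have [x0 [hx0 ec]] := (chamberP hA c).1 hc; rewrite ec in hwc *.
have [s0 hs0] := (finite_seqP A).1 hfin.
pose hyps := chain_hyps A l w x0 s0.
exists (size hyps).+1, (chain A l w x0 s0), (nth set0 hyps).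
split; [split => //; by rewrite /chain chain_pt0 | | | | split].
- by move=> k; apply: chain_chamber.
- by move=> c'; apply: chain_complete.
- by move=> i j; apply: chain_inj.
- exact: L1_chain0.
- by move=> k; apply: L1_chainS.
- exact: L1_chain_last.
- by move=> i j k; apply: Hs_meet_eq.
Qed.
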